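(* Let $G$ be an $(n,d,\beta)$ expander with girth $g$, endowed with its shortest path metric $c$, and let $r$ be a root vertex. Let $P=\{p_v: v\in V\}$ be a collection of paths in $G$, $p_v$ from $v$ to $r$, and let $F$ be the set of first edges $(v,v_1)$ of the paths $p_v$. Let $q=(u_1,\ldots,u_t)$ be a walk in $G$ with $t=g/3$ which is good, i.e. at most $t/8$ of its edges $(u_i,u_{i+1})$ lie in $F$ and it contains at least $t/2$ distinct vertices. Let $X$ be the set of distinct vertices of $q$. Then $c(P[X]) = \Omega(|X|\, g)$.
   Context: An $(n,d,\beta)$ expander is a $d$-regular graph on $n$ vertices whose adjacency matrix has second largest eigenvalue $\beta<1$. The girth is the length of a shortest cycle. $c(P[X]) := c(\bigcup_{v\in X}E(p_v))$, the total cost of the union of the edges of the paths $p_v$, $v\in X$; in the shortest path metric each graph edge has cost $1$. The $\Omega$ hides an absolute constant. *)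

From HB Require Import structures.
From mathcomp Require Import all_boot all_order all_algebra.
From mathcomp Require Import reals.
Set Implicit Arguments. Unset Strict Implicit. Unset Printing Implicit Defensive.
Import Order.TTheory GRing.Theory Num.Theory.
Local Open Scope ring_scope.

Definition simple_graph n (e : rel 'I_n) : Prop :=
  symmetric e /\ irreflexive e.

Definition regular n (e : rel 'I_n) (d : nat) : Prop :=
  forall v : 'I_n, #|[set w | e v w]| = d.

Definition adjmx (R : realType) n (e : rel 'I_n) : 'M[R]_n :=
  \matrix_(i, j) ((e i j)%:R : R).

Definition nadjmx (R : realType) n (e : rel 'I_n) (d : nat) : 'M[R]_n :=
  (d%:R)^-1 *: adjmx R e.

(* beta is the second largest eigenvalue (with multiplicity) of the
   normalized adjacency matrix: the characteristic polynomial splits as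
   prod (X - s_i) with s sorted non-increasingly, and beta = s_1. *)
Definition second_eigenvalue (R : realType) n (M : 'M[R]_n) (beta : R) : Prop :=
  exists s : seq R,
    [/\ sorted (fun x y => y <= x) s,
        char_poly M = \prod_(x <- s) ('X - x%:P) &
        nth 0 s 1 = beta].

Definition expander (R : realType) n (e : rel 'I_n) (d : nat) (beta : R) : Prop :=
  [/\ simple_graph e, regular e d,
      second_eigenvalue (nadjmx R e d) beta & beta < 1].

Definition is_cycle n (e : rel 'I_n) (s : seq 'I_n) : bool :=
  [&& uniq s, (3 <= size s)%N & cycle e s].

Definition girth n (e : rel 'I_n) (g : nat) : Prop :=
  (exists s, is_cycle e s /\ size s = g) /\
  (forall s, is_cycle e s -> (g <= size s)%N).

(* A path from v to r: the vertex sequence v :: s, simple, consecutive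
   vertices adjacent, ending at r.  P v is the tail s of p_v. *)
Definition is_path_to n (e : rel 'I_n) (v r : 'I_n) (s : seq 'I_n) : bool :=
  [&& path e v s, uniq (v :: s) & last v s == r].

Definition seq_edges n (w : seq 'I_n) : seq {set 'I_n} :=
  [seq [set xy.1; xy.2] | xy <- zip w (behead w)].

Definition path_edges n (P : 'I_n -> seq 'I_n) (v : 'I_n) : {set {set 'I_n}} :=
  [set E in seq_edges (v :: P v)].

Definition cost_union n (P : 'I_n -> seq 'I_n) (X : {set 'I_n}) : nat :=
  #|\bigcup_(v in X) path_edges P v|.

Definition first_edges n (P : 'I_n -> seq 'I_n) : {set {set 'I_n}} :=
  [set E | [exists v : 'I_n,
     if P v is v1 :: _ then E == [set v; v1] else false]].

Definition is_walk n (e : rel 'I_n) (q : seq 'I_n) : bool :=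
  if q is x :: s then path e x s else true.

Definition edges_in n (q : seq 'I_n) (F : {set {set 'I_n}}) : nat :=
  count (fun E => E \in F) (seq_edges q).

Definition good_walk n (P : 'I_n -> seq 'I_n) (t : nat) (q : seq 'I_n) : Prop :=
  (8 * edges_in q (first_edges P) <= t)%N /\ (t <= 2 * #|[set x in q]|)%N.

From mathcomp Require Import all_boot all_order all_algebra.
From mathcomp Require Import reals.
From mathcomp Require Import zify.
Import GRing.Theory Num.Theory.
Set Implicit Arguments. Unset Strict Implicit. Unset Printing Implicit Defensive.

(* Call [u] a leaving vertex if [u] lies on [q] and the first edge of [p_u] is
   not an edge of [q].  Every vertex of [q] other than [r] and the endpoints of
   the at most [t/8] edges of [q] in [F] is leaving, so about half of [X] is.
   Any two vertices of [q] are joined by a subwalk of [q] of length [< t], and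
   [g >= 3t].  Hence the first [t - 1] vertices of the paths of two distinct
   leaving vertices never meet: a meeting point would close, with the subwalk,
   a cycle shorter than [g], unless the first edge of one of the two paths lies
   on [q].  So at most one leaving vertex has a path shorter than [t - 1], and
   the others contribute [t - 1] edges each, all distinct:
   [c(P[X]) >= (|X|/2 - O(1)) (t - 1) = Omega(|X| g)]. *)

Section SeqEdges.

Variable n : nat.
Implicit Types (x y z : 'I_n) (s w : seq 'I_n).

Lemma seq_edges_cons2 x y s :
  seq_edges [:: x, y & s] = [set x; y] :: seq_edges (y :: s).
Proof. by []. Qed.

Lemma seq_edges_cat x s1 s2 :
  seq_edges (x :: s1 ++ s2) = seq_edges (x :: s1) ++ seq_edges (last x s1 :: s2).
Proof. by elim: s1 x => [|y s1 IH] x //=; rewrite !seq_edges_cons2 IH. Qed.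

Lemma seq_edges_catr s1 s2 : {subset seq_edges s2 <= seq_edges (s1 ++ s2)}.
Proof.
case: s1 => [|x s1] // E; case: s2 => [|y s2] //.
by rewrite seq_edges_cat seq_edges_cons2 mem_cat inE => ->; rewrite !orbT.
Qed.

Lemma seq_edges_catl s1 s2 : {subset seq_edges s1 <= seq_edges (s1 ++ s2)}.
Proof. by case: s1 => [|x s1] // E; rewrite seq_edges_cat mem_cat => ->. Qed.

Lemma seq_edges_vertex w E z : E \in seq_edges w -> z \in E -> z \in w.
Proof.
elim: w => [|x [|y w] IH] //; rewrite seq_edges_cons2 inE => /orP [/eqP -> | /IH Hw].
  by rewrite !inE => /orP [] ->; rewrite ?orbT.
by move=> /Hw zw; rewrite inE zw orbT.
Qed.

Lemma seq_edges_nth w x0 i :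
  i.+1 < size w -> [set nth x0 w i; nth x0 w i.+1] \in seq_edges w.
Proof.
elim: w i => [|x [|y w] IH] [|i] //= Hi; rewrite seq_edges_cons2 inE ?eqxx //.
by rewrite IH ?orbT.
Qed.

Lemma seq_edges_rcons s y x :
  seq_edges (rcons (rcons s y) x) = rcons (seq_edges (rcons s y)) [set y; x].
Proof.
case: s => [|a s] //.
by rewrite rcons_cons -cats1 seq_edges_cat last_rcons cats1.
Qed.

Lemma seq_edges_rev w : seq_edges (rev w) =i seq_edges w.
Proof.
elim: w => [|x [|y w] IH] // E.
rewrite !rev_cons seq_edges_rcons mem_rcons in_cons -rev_cons IH.
by rewrite seq_edges_cons2 !inE setUC.
Qed.

Lemma seq_edges_card_le2 w E : E \in seq_edges w -> #|E| <= 2.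
Proof. by case/mapP => xy _ ->; rewrite cards2; case: (_ != _). Qed.

End SeqEdges.

Lemma last_take (T : Type) (x : T) s k :
  k <= size s -> last x (take k s) = nth x (x :: s) k.
Proof.
elim: s x k => [|y s IH] x [|k] //= k_le.
by rewrite IH // (set_nth_default x).
Qed.

Lemma last_take_index (T : eqType) (x z : T) s :
  z \in x :: s -> last x (take (index z (x :: s)) s) = z.
Proof. by move=> z_in; rewrite last_take ?nth_index // -ltnS index_mem. Qed.

Lemma head_take (T : Type) (x : T) s k : 0 < k -> head x (take k s) = head x s.
Proof. by case: k => // k; case: s. Qed.

Lemma mem_nth_edge (T : finType) (s : seq T) x0 j z :
  uniq s -> j.+1 < size s -> z \in [set nth x0 s j; nth x0 s j.+1] ->
  z \in s /\ index z s <= j.+1.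
Proof.
move=> s_uniq j_lt z_in.
have [k [k_le ->]] : exists k, k <= j.+1 /\ z = nth x0 s k.
  by move: z_in; rewrite !inE => /orP [] /eqP ->; [exists j | exists j.+1].
have k_lt := leq_ltn_trans k_le j_lt.
by rewrite mem_nth // index_uniq.
Qed.

Lemma nth_edge_inj (T : finType) (s : seq T) x0 i j :
  uniq s -> i.+1 < size s -> j.+1 < size s ->
  [set nth x0 s i; nth x0 s i.+1] = [set nth x0 s j; nth x0 s j.+1] -> i = j.
Proof.
move=> s_uniq i_lt j_lt edge_eq; have j_lt' := ltnW j_lt.
have idx k : k < size s -> nth x0 s k \in [set nth x0 s j; nth x0 s j.+1] ->
    k = j \/ k = j.+1.
  by move=> k_lt; rewrite !inE !nth_uniq // => /orP [] /eqP; [left | right].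
have [//|i_eq] : i = j \/ i = j.+1 by apply: idx (ltnW i_lt) _; rewrite -edge_eq set21.
have : i.+1 = j \/ i.+1 = j.+1 by apply: idx i_lt _; rewrite -edge_eq set22.
lia.
Qed.

Definition nonbacktracking (T : eqType) (w : seq T) :=
  forall x0 i, i.+2 < size w -> nth x0 w i != nth x0 w i.+2.

Lemma nonbacktracking_glue (T : eqType) (x : T) (A B : seq T) :
  uniq (x :: A) -> uniq (x :: B) -> head x A != head x B ->
  nonbacktracking (rev A ++ x :: B).
Proof.
rewrite cons_uniq => /andP [x_notin_A A_uniq] B_uniq hAB x0 i.
rewrite size_cat size_rev /= => i_lt; rewrite !nth_cat size_rev.
have [A_le_i | i_A] := leqP (size A) i.
  rewrite ltnNge (leqW (leqW A_le_i)) /=.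
  by rewrite (_ : i.+2 - size A = (i - size A).+2) ?nth_uniq //=; lia.
have [i2_A | A_le_i2] := ltnP i.+2 (size A).
  by rewrite !nth_rev // nth_uniq //; lia.
rewrite nth_rev //.
have [A_eq | A_eq] : size A = i.+2 \/ size A = i.+1 by lia.
  rewrite A_eq (_ : i.+2 - i.+1 = 1) ?subnn //=; last by lia.
  by apply: contraNneq x_notin_A => <-; rewrite mem_nth // A_eq.
rewrite A_eq subnn (_ : i.+2 - i.+1 = 1) /=; last by lia.
case: A A_eq hAB i_lt {x_notin_A A_uniq i_A A_le_i2} => [|a A] //= A_eq.
by case: B {B_uniq} => [|b B] //= _; lia.
Qed.

Section Walks.

Variables (n : nat) (e : rel 'I_n).
Implicit Types (x y u v : 'I_n) (s w p : seq 'I_n).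

Lemma is_walk_catr s1 s2 : is_walk e (s1 ++ s2) -> is_walk e s2.
Proof.
case: s1 => [|x s1] //; case: s2 => [|y s2] //=.
by rewrite cat_path => /andP [_ /= /andP []].
Qed.

Lemma is_walk_glue s1 x s2 :
  is_walk e (rcons s1 x) -> is_walk e (x :: s2) -> is_walk e (s1 ++ x :: s2).
Proof. by case: s1 => [|y s1] //=; rewrite rcons_path cat_path /= => /andP [-> ->]. Qed.

Lemma is_walk_rev w : symmetric e -> is_walk e (rev w) = is_walk e w.
Proof.
move=> e_sym; case: w => [|x s] //; rewrite {1}lastI rev_rcons /= rev_path.
by rewrite (@eq_path _ _ e) // => y z; rewrite e_sym.
Qed.

Lemma path_shorten x p : path e x p ->
  exists p', [/\ path e x p', uniq (x :: p'), last x p' = last x p,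
    size p' <= size p & {subset seq_edges (x :: p') <= seq_edges (x :: p)}].
Proof.
elim: p x => [|y p IH] x /=; first by exists [::].
case/andP=> exy /IH [p' [p'_path p'_uniq p'_last p'_size p'_edges]].
have edges_y : {subset seq_edges (y :: p') <= seq_edges [:: x, y & p]}.
  by move=> E /p'_edges; rewrite seq_edges_cons2 inE => ->; rewrite orbT.
have [x_in | x_notin] := boolP (x \in y :: p'); last first.
  exists (y :: p'); split => //=; rewrite ?exy ?x_notin //.
  by move=> E; rewrite seq_edges_cons2 inE => /orP [/eqP -> | /edges_y //];
    rewrite seq_edges_cons2 inE eqxx.
have [l1 [l2 yp'_eq]] : exists l1 l2, y :: p' = l1 ++ x :: l2.
  by case/splitPr: x_in => l1 l2; exists l1, l2.
exists l2; split.
- by apply: (@is_walk_catr l1 (x :: l2)); rewrite -yp'_eq; exact: p'_path.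
- by move: p'_uniq; rewrite -[uniq _]/(uniq (y :: p')) yp'_eq cat_uniq => /and3P [].
- by rewrite -p'_last -[last y p']/(last x (y :: p')) yp'_eq last_cat.
- by have := congr1 size yp'_eq; rewrite size_cat /=; lia.
- by move=> E /(seq_edges_catr l1); rewrite -yp'_eq => /edges_y.
Qed.

Lemma nonbacktracking_walk_cycle c :
  irreflexive e -> is_walk e c -> ~~ uniq c -> nonbacktracking c ->
  exists s, is_cycle e s /\ size s < size c.
Proof.
move=> e_irr; elim: c => [|x c IH] // c_walk.
rewrite cons_uniq negb_and negbK => c_nuniq c_nb.
have c_walk' : is_walk e c by apply: (@is_walk_catr [:: x]).
have c_nb' : nonbacktracking c by move=> x0 i; apply: (c_nb x0 i.+1).
have [c_uniq | c_nuniq'] := boolP (uniq c); last first.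
  by have [s [s_cycle /ltnW s_size]] := IH c_walk' c_nuniq' c_nb'; exists s.
have x_in : x \in c by move: c_nuniq; rewrite c_uniq orbF.
have [l1 [l2 c_eq]] : exists l1 l2, c = l1 ++ x :: l2.
  by case/splitPr: x_in => l1 l2; exists l1, l2.
exists (x :: l1); split; last by rewrite c_eq /= size_cat /=; lia.
move: c_walk c_uniq c_nb; rewrite c_eq /= cat_path cat_uniq.
move=> /andP [l1_path /= /andP [l1_x _]] /and3P [l1_uniq /norP [x_notin_l1 _] _].
rewrite /is_cycle /= x_notin_l1 l1_uniq rcons_path l1_path l1_x !andbT.
case: l1 {l1_path l1_uniq x_notin_l1 c_eq} l1_x => [|a [|b l1]] //=.
- by rewrite e_irr.
- by move=> _ /(_ x 0 isT); rewrite eqxx.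
Qed.

Lemma walk_segment_forward w1 u w2 v :
  is_walk e (w1 ++ u :: w2) -> v \in u :: w2 ->
  exists s, [/\ path e u s, last u s = v, size s <= size w2 &
    {subset seq_edges (u :: s) <= seq_edges (w1 ++ u :: w2)}].
Proof.
move=> /is_walk_catr w2_path v_in.
exists (take (index v (u :: w2)) w2); split.
- exact: take_path.
- exact: last_take_index.
- by rewrite size_take_min geq_minr.
- move=> E E_in; apply: seq_edges_catr.
  rewrite -(cat_take_drop (index v (u :: w2)) w2) -cat_cons.
  exact: seq_edges_catl.
Qed.

Lemma walk_segment q u v : symmetric e -> is_walk e q -> u \in q -> v \in q ->
  exists s, [/\ path e u s, last u s = v, size s < size q &
    {subset seq_edges (u :: s) <= seq_edges q}].
Proof.
move=> e_sym q_walk u_in v_in; move: q_walk v_in.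
case/splitPr: u_in => w1 w2 q_walk v_in.
have [v_in2 | v_notin2] := boolP (v \in u :: w2).
  have [s [s_path s_last s_size s_edges]] := walk_segment_forward q_walk v_in2.
  by exists s; split => //; rewrite size_cat /=; lia.
have v_in1 : v \in u :: rev w1.
  move: v_in; rewrite mem_cat (negbTE v_notin2) orbF in_cons mem_rev.
  by move=> ->; rewrite orbT.
have rq_walk : is_walk e (rev w2 ++ u :: rev w1) by rewrite -rev_pivot is_walk_rev.
have [s [s_path s_last s_size s_edges]] := walk_segment_forward rq_walk v_in1.
exists s; split => //.
- by rewrite size_rev in s_size; rewrite size_cat /=; lia.
- by move=> E /s_edges; rewrite -rev_pivot seq_edges_rev.
Qed.

End Walks.

Section Girth.

Variables (n g : nat) (e : rel 'I_n).
Hypotheses (e_irr : irreflexive e) (e_sym : symmetric e)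
  (girth_ge : forall s, is_cycle e s -> g <= size s).

(* Otherwise the path and the (shortened) walk, glued at [x], form a closed
   walk without backtracking, which contains a cycle shorter than [g]. *)
Lemma girth_first_edge x pa pb :
  pa != [::] -> path e x pa -> uniq (x :: pa) -> path e x pb ->
  last x pa = last x pb -> size pa + size pb < g ->
  [set x; head x pa] \in seq_edges (x :: pb).
Proof.
move=> pa_nil pa_path pa_uniq /path_shorten [pb' [pb'_path pb'_uniq pb'_last pb'_size]].
move=> pb'_edges same_end short; apply: pb'_edges.
have [hd_eq | hd_neq] := eqVneq (head x pa) (head x pb').
  case: pb' hd_eq {pb'_path pb'_uniq pb'_last pb'_size} => [|b pb'] /= hd_eq.
    move: pa_nil pa_uniq hd_eq; case: (pa) => [|a pa'] //= _ /andP [x_notin _] a_x.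
    by rewrite -a_x mem_head in x_notin.
  by rewrite seq_edges_cons2 hd_eq mem_head.
have last_pa : last x pa \in pa by case: (pa) pa_nil => [|a pa'] //= _; exact: mem_last.
set c := rev pa ++ x :: pb'.
have c_walk : is_walk e c.
  by apply: is_walk_glue => //; rewrite -rev_cons is_walk_rev.
have c_nuniq : ~~ uniq c.
  apply/negP; rewrite cat_uniq => /and3P [_ /hasPn/(_ _ (mem_last x pb')) + _].
  by rewrite mem_rev pb'_last -same_end last_pa.
have c_nb : nonbacktracking c by apply: nonbacktracking_glue.
have [s [s_cycle s_size]] := nonbacktracking_walk_cycle e_irr c_walk c_nuniq c_nb.
exfalso; move: (girth_ge s_cycle); apply/negP; rewrite -ltnNge.
apply: leq_trans s_size _; rewrite size_cat size_rev /= addnS.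
exact: leq_ltn_trans (leq_add (leqnn _) pb'_size) short.
Qed.

End Girth.

Definition leaves_walk n (P : 'I_n -> seq 'I_n) (q : seq 'I_n) (u : 'I_n) :=
  [&& u \in q, P u != [::] & [set u; head u (P u)] \notin seq_edges q].

Definition path_edge n (P : 'I_n -> seq 'I_n) (u : 'I_n) (i : nat) :=
  [set nth u (u :: P u) i; nth u (u :: P u) i.+1].

Section PathsToRoot.

Variables (n g : nat) (e : rel 'I_n) (r : 'I_n) (P : 'I_n -> seq 'I_n) (q : seq 'I_n).
Hypotheses (e_irr : irreflexive e) (e_sym : symmetric e)
  (girth_ge : forall s, is_cycle e s -> g <= size s)
  (P_paths : forall v, is_path_to e v r (P v)) (q_walk : is_walk e q).

Lemma prefix_path u k : path e u (take k (P u)) /\ uniq (u :: take k (P u)).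
Proof.
have /and3P [Pu_path Pu_uniq _] := P_paths u.
by split; [exact: take_path | exact: (take_uniq k.+1 Pu_uniq)].
Qed.

Lemma root_on_path u : r \in u :: P u /\ index r (u :: P u) <= size (P u).
Proof.
have /and3P [_ _ /eqP <-] := P_paths u.
by rewrite -ltnS -[(size (P u)).+1]/(size (u :: P u)) index_mem mem_last.
Qed.

Lemma leaving_path_avoids_walk u v :
  leaves_walk P q u -> v \in q -> v != u -> v \in u :: P u ->
  index v (u :: P u) + size q <= g -> False.
Proof.
move=> /and3P [u_in Pu_nil u_off] v_in vu v_on short.
set a := index v (u :: P u) in short.
have a_pos : 0 < a by rewrite /a /= eq_sym (negbTE vu).
have [pa_path pa_uniq] := prefix_path u a.
have [s [s_path s_last s_size s_edges]] := walk_segment e_sym q_walk u_in v_in.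
apply/negP: u_off; rewrite negbK -(head_take u (P u) a_pos); apply: s_edges.
apply: (girth_first_edge e_irr e_sym girth_ge) => //.
- by case: (P u) Pu_nil => // y s' _; case: (a) a_pos => //=.
- by rewrite last_take_index // s_last.
- by rewrite size_take_min; lia.
Qed.

Lemma leaving_paths_far_apart u v z :
  leaves_walk P q u -> leaves_walk P q v -> u != v ->
  z \in u :: P u -> z \in v :: P v ->
  index z (u :: P u) + index z (v :: P v) + size q <= g -> False.
Proof.
move=> u_leaves v_leaves uv z_on_u z_on_v short.
have u_in : u \in q by case/and3P: u_leaves.
have [v_in Pv_nil v_off] := and3P v_leaves.
have [zv | zv] := eqVneq z v.
  subst z; apply: (leaving_path_avoids_walk u_leaves v_in) => //; first by rewrite eq_sym.
  by clear -short; lia.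
set a := index z (u :: P u) in short; set b := index z (v :: P v) in short.
have b_pos : 0 < b by rewrite /b /= eq_sym (negbTE zv).
have [pb_path pb_uniq] := prefix_path v b.
have [pa_path _] := prefix_path u a.
have [s [s_path s_last s_size s_edges]] := walk_segment e_sym q_walk v_in u_in.
have : [set v; head v (take b (P v))] \in seq_edges (v :: s ++ take a (P u)).
  apply: (girth_first_edge e_irr e_sym girth_ge) => //.
  - by case: (P v) Pv_nil => // y s' _; case: (b) b_pos => //=.
  - by rewrite cat_path s_path s_last.
  - by rewrite last_cat s_last !last_take_index.
  - have sa : size (take a (P u)) <= a by rewrite size_take_min geq_minl.
    have sb : size (take b (P v)) <= b by rewrite size_take_min geq_minl.
    rewrite size_cat; apply: leq_ltn_trans (leq_add sb (leq_add (leqnn _) sa)) _.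
    by clear -s_size short; lia.
rewrite head_take // seq_edges_cat s_last mem_cat => /orP [/s_edges | on_pa].
  by rewrite (negbTE v_off).
have : v \in take a.+1 (u :: P u) by apply: seq_edges_vertex on_pa _; exact: set21.
move=> /[dup] /mem_take v_on /index_ltn v_idx.
apply: (leaving_path_avoids_walk u_leaves v_in) => //; first by rewrite eq_sym.
by clear -short v_idx; lia.
Qed.

Lemma card_walk_le_leaving :
  #|[set x in q]| <= #|[set u | leaves_walk P q u]| + 1 + 2 * edges_in q (first_edges P).
Proof.
set EF := [set E in seq_edges q | E \in first_edges P].
have walk_sub : [set x in q] \subset [set u | leaves_walk P q u] :|: (r |: cover EF).
  apply/subsetP => x; rewrite !inE => x_in.
  have [//|x_stays] := boolP (leaves_walk P q x); apply/orP; right.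
  move: x_stays; rewrite /leaves_walk x_in /= negb_and !negbK.
  case Px: (P x) => [|x1 px] /=.
    by have /and3P [_ _] := P_paths x; rewrite Px /= => ->.
  move=> E_in; apply/orP; right; apply/bigcupP; exists [set x; x1]; last exact: set21.
  by rewrite !inE E_in /=; apply/existsP; exists x; rewrite Px eqxx.
have EF_card : #|EF| <= edges_in q (first_edges P).
  rewrite /edges_in -size_filter; apply: leq_trans (card_size _).
  by apply: subset_leq_card; apply/subsetP => E; rewrite inE mem_filter andbC.
have cover_card : #|cover EF| <= 2 * #|EF|.
  apply: leq_trans (leq_card_cover EF).1 _; rewrite mulnC -sum_nat_const.
  by apply: leq_sum => E; rewrite inE => /andP [/seq_edges_card_le2].
apply: leq_trans (subset_leq_card walk_sub) _.
apply: leq_trans (leq_card_setU _ _).1 _; rewrite -addnA leq_add2l cardsU1.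
apply: leq_add; first by case: (_ \notin _).
by apply: leq_trans cover_card _; rewrite leq_mul2l EF_card orbT.
Qed.

Hypothesis q_short : 3 * size q <= g.

Lemma card_short_leaving_le1 :
  #|[set u | leaves_walk P q u & size (P u) < (size q).-1]| <= 1.
Proof.
apply/card_le1_eqP => u v; rewrite !inE.
move=> /andP [u_leaves u_short] /andP [v_leaves v_short].
apply/eqP/negPn/negP => uv.
have [r_on_u r_u] := root_on_path u; have [r_on_v r_v] := root_on_path v.
apply: (leaving_paths_far_apart u_leaves v_leaves _ r_on_u r_on_v); first by rewrite eq_sym.
by clear -r_u r_v u_short v_short q_short; lia.
Qed.

Lemma card_long_leaving_cost :
  #|[set u | leaves_walk P q u & (size q).-1 <= size (P u)]| * (size q).-1
    <= cost_union P [set x in q].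
Proof.
set L := (size q).-1; set S := [set u | _ & _].
pose f (p : 'I_n * 'I_L) := path_edge P p.1 p.2.
have f_inj : {in setX S [set: 'I_L] &, injective f}.
  move=> [u i] [v j]; rewrite !in_setX !inE !andbT /f /path_edge /=.
  move=> /andP [u_leaves u_long] /andP [v_leaves v_long] f_eq.
  have u_uniq : uniq (u :: P u) by case/and3P: (P_paths u).
  have v_uniq : uniq (v :: P v) by case/and3P: (P_paths v).
  have i_lt : i.+1 < size (u :: P u) by rewrite /= ltnS; apply: leq_trans u_long.
  have j_lt : j.+1 < size (v :: P v) by rewrite /= ltnS; apply: leq_trans v_long.
  have uv : u = v.
    apply/eqP/negPn/negP => uv.
    have z_in := set21 (nth u (u :: P u) i) (nth u (u :: P u) i.+1).
    have [z_on_u z_u] := mem_nth_edge u_uniq i_lt z_in.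
    rewrite f_eq in z_in; have [z_on_v z_v] := mem_nth_edge v_uniq j_lt z_in.
    apply: (leaving_paths_far_apart u_leaves v_leaves uv z_on_u z_on_v).
    apply: leq_trans (leq_add (leq_add z_u z_v) (leqnn _)) _.
    by move: (ltn_ord i) (ltn_ord j); rewrite /L; clear -q_short; lia.
  subst v; congr (_, _); apply: val_inj; exact: nth_edge_inj f_eq.
have -> : #|S| * L = #|f @: setX S [set: 'I_L]|.
  by rewrite card_in_imset // cardsX cardsT card_ord.
apply: subset_leq_card; apply/subsetP => E /imsetP [[u i]].
rewrite in_setX !inE andbT => /andP [/and3P [u_in _ _] u_long] ->.
apply/bigcupP; exists u; rewrite ?inE //.
by apply: seq_edges_nth; rewrite /= ltnS; apply: leq_trans u_long.
Qed.

Lemma leaving_cost :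
  (#|[set u | leaves_walk P q u]| - 1) * (size q).-1 <= cost_union P [set x in q].
Proof.
apply: leq_trans card_long_leaving_cost; rewrite leq_mul2r leq_subLR; apply/orP; right.
apply: leq_trans (leq_add card_short_leaving_le1 (leqnn _)).
apply: leq_trans (leq_card_setU _ _).1; apply: subset_leq_card.
by apply/subsetP => u; rewrite !inE => -> /=; case: ltnP.
Qed.

End PathsToRoot.

Lemma cost_bound_arith x s c t g f :
  (s - 1) * t.-1 <= c -> x <= s + 1 + 2 * f -> 8 * f <= t -> t <= 2 * x ->
  3 * t <= g < 3 * t + 3 -> 300 <= g -> x * g <= 100 * c.
Proof.
move=> cost_ge x_le f_le t_le /andP [g_ge g_lt] g_large.
have {x_le f_le} x_le : x <= 2 * (s - 1) + 4 by lia.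
have t_large : 100 <= t by lia.
have s_large : 23 <= s - 1 by lia.
move: (s - 1) cost_ge x_le s_large => s' cost_ge x_le s_large.
apply: leq_trans (_ : (2 * s' + 4) * (3 * t + 3) <= _); first by apply: leq_mul; lia.
apply: leq_trans (_ : 100 * (s' * t.-1) <= _); last by rewrite leq_mul2l cost_ge orbT.
have : 23 * 100 <= s' * t by apply: leq_mul.
nia.
Qed.

Local Open Scope ring_scope.

Theorem lemma7 :
  exists (C : rat) (g0 : nat), 0 < C /\
  forall (R : realType) (n d : nat) (beta : R) (e : rel 'I_n) (g : nat)
         (r : 'I_n) (P : 'I_n -> seq 'I_n) (q : seq 'I_n),
    expander e d beta ->
    girth e g ->
    (g0 <= g)%N ->
    (forall v, is_path_to e v r (P v)) ->
    is_walk e q ->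
    size q = (g %/ 3)%N ->
    good_walk P (g %/ 3) q ->
    C * (#|[set x in q]| * g)%:R <= (cost_union P [set x in q])%:R.
Proof.
exists (100%:R)^-1, 300%N; split; first by rewrite invr_gt0 ltr0n.
move=> R n d beta e g r P q [[e_sym e_irr] _ _ _] [_ girth_ge] g_large P_paths q_walk.
move=> q_size [q_first q_card]; rewrite -q_size in q_first q_card.
have q_short : (3 * size q <= g)%N by rewrite q_size mulnC leq_trunc_div.
have q_long : (g < 3 * size q + 3)%N.
  by rewrite q_size {1}(divn_eq g 3) mulnC ltn_add2l ltn_pmod.
rewrite ler_pdivrMl; last by rewrite ltr0n.
rewrite -natrM ler_nat.
apply: (cost_bound_arith _ (card_walk_le_leaving q P_paths) q_first q_card) => //.
- exact: leaving_cost e_irr e_sym girth_ge P_paths q_walk q_short.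
- by rewrite q_short q_long.
Qed.
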